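(* Let $M$ be a magma satisfying $xy = xz$ and $(xy)z = x$ for all $x,y,z\in M$. Then $M$ satisfies $xy = x$ for all $x,y\in M$ if and only if $M$ avoids the magma $N$ on $\{0,1\}$ with Cayley table \[ \begin{array}{c|cc} N & 0 & 1 \\ \hline 0 & 1 & 1 \\ 1 & 0 & 0 \end{array}. \]
   Context: A magma is a nonempty set with a binary operation, written by juxtaposition. A magma $M$ avoids a magma $F$ if no submagma of $M$ is isomorphic to $F$. *)

From Stdlib Require Import Bool.

Definition submagma {M : Type} (op : M -> M -> M) (S : M -> Prop) : Prop :=
  (exists x, S x) /\ (forall x y, S x -> S y -> S (op x y)).

Definition sub_isomorphic {M F : Type} (op : M -> M -> M) (S : M -> Prop)
    (opF : F -> F -> F) : Prop :=
  exists (f : F -> M) (g : M -> F),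
    (forall a, S (f a)) /\
    (forall a, g (f a) = a) /\
    (forall x, S x -> f (g x) = x) /\
    (forall a b, f (opF a b) = op (f a) (f b)).

Definition avoids {M F : Type} (op : M -> M -> M) (opF : F -> F -> F) : Prop :=
  ~ (exists S : M -> Prop, submagma op S /\ sub_isomorphic op S opF).

(* The magma N on {0,1} (0 = false, 1 = true): 0*0 = 0*1 = 1, 1*0 = 1*1 = 0. *)
Definition N_op (x y : bool) : bool :=
  match x, y with
  | false, false => true
  | false, true => true
  | true, false => false
  | true, true => false
  end.

(* In such a magma left multiplication is constant: a z = a b =: c for every z,
   and then c z = (a b) z = a.  So if a b <> a, the pair {a, a b} is a copy of N
   (a |-> 0, a b |-> 1).  Conversely, a submagma of a magma satisfying x y = x
   satisfies it too, and so does every isomorphic copy; N does not, as 0 0 = 1. *)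

From Stdlib Require Import Classical ClassicalDescription.

Lemma sub_isomorphic_left_projection {M F : Type} (op : M -> M -> M)
    (S : M -> Prop) (opF : F -> F -> F) :
  (forall x y, op x y = x) -> sub_isomorphic op S opF ->
  forall a b, opF a b = a.
Proof.
  intros Hproj [f [g [_ [Hgf [_ Hf]]]]] a b.
  rewrite <- (Hgf (opF a b)), Hf, Hproj.
  apply Hgf.
Qed.

Lemma N_op_not_left_projection : ~ (forall a b, N_op a b = a).
Proof. intros H. discriminate (H false false). Qed.

Lemma left_projection_avoids_N {M : Type} (op : M -> M -> M) :
  (forall x y, op x y = x) -> avoids op N_op.
Proof.
  intros Hproj [S [_ Hiso]].
  exact (N_op_not_left_projection (sub_isomorphic_left_projection op S N_op Hproj Hiso)).
Qed.

Section SwappingPair.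

Variables (M : Type) (op : M -> M -> M) (a c : M).
Hypotheses (Hac : forall z, op a z = c) (Hca : forall z, op c z = a).

Definition pair_set (x : M) : Prop := x = a \/ x = c.

Lemma pair_submagma : submagma op pair_set.
Proof.
  split.
  - exists a. now left.
  - intros x y [-> | ->] _; [right | left]; auto.
Qed.

Lemma pair_sub_isomorphic_N : a <> c -> sub_isomorphic op pair_set N_op.
Proof.
  intros Hne.
  exists (fun t : bool => if t then c else a).
  exists (fun x => if excluded_middle_informative (x = c) then true else false).
  repeat split.
  - intros [|]; unfold pair_set; auto.
  - intros [|]; destruct excluded_middle_informative; congruence.
  - intros x [-> | ->]; destruct excluded_middle_informative; congruence.
  - intros [|] [|]; simpl; rewrite ?Hac, ?Hca; reflexivity.
Qed.

End SwappingPair.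

Theorem mainTheorem5 (M : Type) (m0 : M) (op : M -> M -> M)
  (h1 : forall x y z : M, op x y = op x z)
  (h2 : forall x y z : M, op (op x y) z = x) :
  (forall x y : M, op x y = x) <-> avoids op N_op.
Proof.
  split; [apply left_projection_avoids_N |].
  intros Hav a b. apply NNPP. intros Hne.
  apply Hav.
  exists (pair_set M a (op a b)). split.
  - apply pair_submagma; intros z; [apply h1 | apply h2].
  - apply pair_sub_isomorphic_N; [intros z; apply h1 | intros z; apply h2 |].
    intros E. apply Hne. now symmetry.
Qed.
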